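(* Let $S$ be an operator system that is positively generated, i.e. $S^{sa}=S^+-S^+$. Then for each $n\ge1$, $M_n(S)^{sa}=M_n(S)^+-M_n(S)^+$.
   Context: An operator system here is a (possibly nonunital) matrix ordered operator space $S$ (operator space with completely isometric involution and closed matrix cones $M_n(S)^+\subseteq M_n(S)^{sa}$) that admits a completely isometric complete order embedding into $B(H)$ for some Hilbert space $H$. *)

From mathcomp Require Import all_boot all_order all_algebra.
From mathcomp Require Import reals complex.
Set Implicit Arguments. Unset Strict Implicit. Unset Printing Implicit Defensive.
Import Order.TTheory GRing.Theory Num.Theory.
Local Open Scope ring_scope.

Section Defs.
Variable R : realType.
Local Notation C := (R[i]).
Variable H : lmodType C.
Variable ip : H -> H -> C.   (* inner product, linear in the first variable *)

Definition inner_product : Prop :=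
  [/\ (forall (a : C) (x1 x2 y : H), ip (a *: x1 + x2) y = a * ip x1 y + ip x2 y),
      (forall x y : H, ip y x = (ip x y)^*),
      (forall x : H, 0 <= ip x x) &
      (forall x : H, ip x x = 0 -> x = 0)].

(* completeness for the norm ||x|| = sqrt <x,x> (stated with squared norms) *)
Definition ip_complete : Prop :=
  forall u : nat -> H,
    (forall e : C, 0 < e -> exists N : nat, forall m n : nat,
        (N <= m)%N -> (N <= n)%N -> ip (u m - u n) (u m - u n) < e) ->
    exists l : H, forall e : C, 0 < e -> exists N : nat, forall n : nat,
        (N <= n)%N -> ip (u n - l) (u n - l) < e.

Definition hilbert_space : Prop := inner_product /\ ip_complete.

Definition bounded_operator (T : H -> H) : Prop :=
  (forall (a : C) (x y : H), T (a *: x + y) = a *: T x + T y) /\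
  (exists M : C, 0 <= M /\ forall x : H, ip (T x) (T x) <= M * ip x x).

Definition is_adjoint (T T' : H -> H) : Prop :=
  forall x y : H, ip (T x) y = ip x (T' y).

(* A (concrete, possibly nonunital) operator system: a self-adjoint linear
   subspace S of B(H), with the matrix order inherited from B(H^n). *)
Definition operator_system (S : (H -> H) -> Prop) : Prop :=
  [/\ (forall T, S T -> bounded_operator T),
      S (fun _ => 0),
      (forall (a : C) (T U : H -> H), S T -> S U -> S (fun x => a *: T x + U x)) &
      (forall T, S T -> exists T', S T' /\ is_adjoint T T')].

Definition in_Mn (S : (H -> H) -> Prop) (n : nat) (X : 'M[H -> H]_n) : Prop :=
  forall i j, S (X i j).

Definition mx_selfadjoint (n : nat) (X : 'M[H -> H]_n) : Prop :=
  forall i j, is_adjoint (X i j) (X j i).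

Definition mx_positive (n : nat) (X : 'M[H -> H]_n) : Prop :=
  forall xi : 'I_n -> H, 0 <= \sum_(i < n) \sum_(j < n) ip (X i j (xi j)) (xi i).

Definition mx_diff (n : nat) (X P Q : 'M[H -> H]_n) : Prop :=
  forall i j (x : H), X i j x = P i j x - Q i j x.

Definition mx_positively_generated (S : (H -> H) -> Prop) (n : nat) : Prop :=
  forall X : 'M[H -> H]_n, in_Mn S X -> mx_selfadjoint X ->
    exists P Q : 'M[H -> H]_n,
      [/\ in_Mn S P, mx_positive P, in_Mn S Q, mx_positive Q & mx_diff X P Q].

Definition positively_generated (S : (H -> H) -> Prop) : Prop :=
  forall T : H -> H, S T -> is_adjoint T T ->
    exists P Q : H -> H,
      [/\ S P, (forall x, 0 <= ip (P x) x), S Q, (forall x, 0 <= ip (Q x) x) &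
          (forall x, T x = P x - Q x)].
End Defs.

From HB Require Import structures.
From mathcomp Require Import all_boot all_order all_algebra.
From mathcomp Require Import reals complex ring.
From mathcomp Require Import boolp functions.
Set Implicit Arguments. Unset Strict Implicit. Unset Printing Implicit Defensive.
Import Order.TTheory GRing.Theory Num.Theory.
Local Open Scope ring_scope.

(** Write the self-adjoint X as the sum over all (i, j) of the hermitian pieces
  E_ij ⊗ X_ij/2 + E_ji ⊗ X_ji/2; since M_n(S)^+ - M_n(S)^+ is closed under
  sums, it suffices to treat E_ij ⊗ Y + E_ji ⊗ Y' with Y' the adjoint of Y.  By
  polarization this piece is (E_ij + E_ji) ⊗ T1 + i(E_ij - E_ji) ⊗ T2 with
  T1 = (Y + Y')/2 and T2 = (-iY + iY')/2 self-adjoint elements of S, and each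
  of the two scalar matrices is w w^* - (e_i e_i^* + e_j e_j^* ), for
  w = e_i + e_j and w = e_i - i e_j respectively.  Now write T = A - B with A, B
  in S^+: for a = a+ - a- one has a ⊗ T = (a+ ⊗ A + a- ⊗ B) - (a- ⊗ A + a+ ⊗ B),
  and w w^* ⊗ A is positive because its quadratic form at xi is <A eta, eta>
  with eta = sum_l conj(w_l) xi_l.  Neither the completeness of H nor the
  boundedness of the operators plays any role. *)

Definition outer_mx (F : numClosedFieldType) n (u v : 'rV[F]_n) : 'M[F]_n :=
  u^T *m map_mx Num.conj v.

Definition mx_tensor (K : pzRingType) (V : lmodType K) n (a : 'M[K]_n) (w : V) :
  'M[V]_n := \matrix_(k, l) (a k l *: w).

Section OuterProduct.
Variables (F : numClosedFieldType) (n : nat).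
Implicit Types u v : 'rV[F]_n.

Lemma outer_mxE u v k l : outer_mx u v k l = u 0 k * (v 0 l)^*.
Proof. by rewrite !mxE big_ord1 !mxE. Qed.

Lemma outer_mx_delta (i j : 'I_n) :
  outer_mx (delta_mx 0 i) (delta_mx 0 j) = delta_mx i j :> 'M[F]_n.
Proof. by rewrite /outer_mx trmx_delta map_delta_mx mul_delta_mx. Qed.

Lemma outer_mx_polarD u v :
  outer_mx (u + v) (u + v) - (outer_mx u u + outer_mx v v) =
  outer_mx u v + outer_mx v u.
Proof.
apply/matrixP => k l; rewrite !mxE !big_ord1 !mxE rmorphD /=; ring.
Qed.

Lemma outer_mx_polarZ u v :
  outer_mx (u - 'i *: v) (u - 'i *: v) - (outer_mx u u + outer_mx v v) =
  'i *: (outer_mx u v - outer_mx v u).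
Proof.
have sqi : 'i * 'i = -1 :> F by rewrite -expr2 sqrCi.
apply/matrixP => k l; rewrite !mxE !big_ord1 !mxE rmorphB rmorphM /= conjCi.
ring: sqi.
Qed.

End OuterProduct.

Section Tensor.
Variable n : nat.

Lemma mx_tensorDl (K : pzRingType) (V : lmodType K) (a b : 'M[K]_n) (w : V) :
  mx_tensor (a + b) w = mx_tensor a w + mx_tensor b w.
Proof. by apply/matrixP => k l; rewrite !mxE scalerDl. Qed.

Lemma mx_tensorBB (K : pzRingType) (V : lmodType K) (a b : 'M[K]_n) (w w' : V) :
  mx_tensor (a - b) (w - w') =
  (mx_tensor a w + mx_tensor b w') - (mx_tensor b w + mx_tensor a w').
Proof.
apply/matrixP => k l.
by rewrite !mxE scalerBl !scalerBr opprB opprD addrACA [- _ - _]addrC.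
Qed.

Lemma mx_tensorDr (K : pzRingType) (V : lmodType K) (a : 'M[K]_n) (w w' : V) :
  mx_tensor a (w + w') = mx_tensor a w + mx_tensor a w'.
Proof. by apply/matrixP => k l; rewrite !mxE scalerDr. Qed.

Lemma mx_tensor_hermitian_pair (F : numClosedFieldType) (V : lmodType F)
    (a b : 'M[F]_n) (y y' : V) :
  mx_tensor (a + b) (2%:R^-1 *: y + (2%:R^-1)^* *: y') +
  mx_tensor ('i *: (a - b)) ((- 'i / 2%:R) *: y + (- 'i / 2%:R)^* *: y') =
  mx_tensor a y + mx_tensor b y'.
Proof.
have sqi : 'i * 'i = -1 :> F by rewrite -expr2 sqrCi.
apply/matrixP => k l; rewrite !mxE !scalerDr !scalerA addrACA -!scalerDl.
rewrite !(rmorphM, rmorphN, fmorphV) /= conjCi conjC_nat.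
by congr (_ *: _ + _ *: _); field: sqi.
Qed.

Lemma mx_tensor_delta_sum (K : pzRingType) (V : lmodType K) (M : 'M[V]_n) :
  \sum_i \sum_j mx_tensor (delta_mx i j) (M i j) = M.
Proof.
apply/matrixP => k l; rewrite summxE (bigD1 k) //= summxE (bigD1 l) //= mxE.
rewrite mxE !eqxx scale1r big1 => [|j ne_jl]; last first.
  by rewrite !mxE eqxx eq_sym (negbTE ne_jl) scale0r.
rewrite big1 ?addr0 // => i ne_ik; rewrite summxE big1 // => j _.
by rewrite !mxE eq_sym (negbTE ne_ik) scale0r.
Qed.

Lemma mx_tensor_delta_halves (F : numFieldType) (V : lmodType F) (M : 'M[V]_n) :
  M = \sum_i \sum_j (mx_tensor (delta_mx i j) (2%:R^-1 *: M i j) +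
                     mx_tensor (delta_mx j i) (2%:R^-1 *: M j i)).
Proof.
pose a i j := mx_tensor (delta_mx i j) (2%:R^-1 *: M i j).
have halves i j : mx_tensor (delta_mx i j) (M i j) = a i j + a i j.
  by rewrite -mx_tensorDr -scalerDl (_ : 2%:R^-1 + 2%:R^-1 = 1) ?scale1r //; field.
have split_sum (b c : 'I_n -> 'I_n -> 'M[V]_n) :
    \sum_i \sum_j (b i j + c i j) = \sum_i \sum_j b i j + \sum_i \sum_j c i j.
  by rewrite -big_split; apply: eq_bigr => i _; rewrite big_split.
rewrite -{1}(mx_tensor_delta_sum M).
rewrite (eq_bigr _ (fun i _ => eq_bigr _ (fun j _ => halves i j))).
by rewrite !split_sum [in X in _ = _ + X]exchange_big.
Qed.

End Tensor.

Section InnerProduct.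
Variables (R : realType) (H : lmodType R[i]) (ip : H -> H -> R[i]).
Hypothesis ip_inner : inner_product ip.

Lemma ipC x y : ip y x = (ip x y)^*.
Proof. by case: ip_inner. Qed.

Lemma ipDl x y z : ip (x + y) z = ip x z + ip y z.
Proof.
by have [ipl _ _ _] := ip_inner; have := ipl 1 x y z; rewrite scale1r mul1r.
Qed.

Lemma ip0l z : ip 0 z = 0.
Proof. by apply: (addrI (ip 0 z)); rewrite addr0 -ipDl addr0. Qed.

Lemma ipZl a x z : ip (a *: x) z = a * ip x z.
Proof.
by have [ipl _ _ _] := ip_inner; rewrite -[a *: x]addr0 ipl ip0l addr0.
Qed.

Lemma ipDr z x y : ip z (x + y) = ip z x + ip z y.
Proof. by rewrite ipC ipDl rmorphD /= -!ipC. Qed.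

Lemma ipZr a x z : ip z (a *: x) = a^* * ip z x.
Proof. by rewrite ipC ipZl rmorphM /= -ipC. Qed.

Lemma ip0r z : ip z 0 = 0.
Proof. by rewrite ipC ip0l rmorph0. Qed.

Lemma ip_suml I (r : seq I) (P : pred I) (F : I -> H) z :
  ip (\sum_(i <- r | P i) F i) z = \sum_(i <- r | P i) ip (F i) z.
Proof. exact: (big_morph (ip^~ z) (fun x y => ipDl x y z) (ip0l z)). Qed.

Lemma ip_sumr I (r : seq I) (P : pred I) (F : I -> H) z :
  ip z (\sum_(i <- r | P i) F i) = \sum_(i <- r | P i) ip z (F i).
Proof. exact: (big_morph (ip z) (ipDr z) (ip0r z)). Qed.

Lemma is_adjoint_sym T T' : is_adjoint ip T T' -> is_adjoint ip T' T.
Proof. by move=> adjT x y; rewrite (ipC y (T' x)) -adjT -ipC. Qed.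

Lemma is_adjointD T T' U U' :
  is_adjoint ip T T' -> is_adjoint ip U U' -> is_adjoint ip (T + U) (T' + U').
Proof. by move=> adjT adjU x y; rewrite ipDl ipDr adjT adjU. Qed.

Lemma is_adjointZ c T T' : is_adjoint ip T T' -> is_adjoint ip (c *: T) (c^* *: T').
Proof. by move=> adjT x y; rewrite ipZl ipZr conjCK adjT. Qed.

Lemma is_adjoint_selfadjoint_comb c Y Y' : is_adjoint ip Y Y' ->
  is_adjoint ip (c *: Y + c^* *: Y') (c *: Y + c^* *: Y').
Proof.
move=> adjY.
have := is_adjointD (is_adjointZ c adjY) (is_adjointZ c^* (is_adjoint_sym adjY)).
by rewrite conjCK [c^* *: Y' + _]addrC.
Qed.

End InnerProduct.

Section PositiveMatrices.
Variables (R : realType) (H : lmodType R[i]) (ip : H -> H -> R[i]).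
Hypothesis ip_inner : inner_product ip.
Variable n : nat.

Lemma mx_positive0 : mx_positive ip (0 : 'M[H -> H]_n).
Proof.
move=> xi; rewrite big1 // => i _; rewrite big1 // => j _.
by rewrite mxE ip0l.
Qed.

Lemma mx_positiveD (P Q : 'M[H -> H]_n) :
  mx_positive ip P -> mx_positive ip Q -> mx_positive ip (P + Q).
Proof.
move=> posP posQ xi.
have -> : \sum_i \sum_j ip ((P + Q) i j (xi j)) (xi i) =
    \sum_i \sum_j ip (P i j (xi j)) (xi i) + \sum_i \sum_j ip (Q i j (xi j)) (xi i).
  rewrite -big_split; apply: eq_bigr => i _; rewrite -big_split; apply: eq_bigr => j _.
  by rewrite mxE ipDl.
exact: addr_ge0.
Qed.

Section RankOne.
Variables (A : H -> H) (A_linear : linear A).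
Hypothesis A_pos : forall x, 0 <= ip (A x) x.
HB.instance Definition _ := GRing.isLinear.Build R[i] H H *:%R A A_linear.

Lemma mx_positive_tensor_outer (u : 'rV_n) :
  mx_positive ip (mx_tensor (outer_mx u u) A).
Proof.
move=> xi; pose y := \sum_l (u 0 l)^* *: xi l.
suff -> : \sum_k \sum_l ip (mx_tensor (outer_mx u u) A k l (xi l)) (xi k) = ip (A y) y
  by apply: A_pos.
rewrite linear_sum ip_suml // exchange_big; apply: eq_bigr => k _.
rewrite ip_sumr //; apply: eq_bigr => l _.
by rewrite mxE outer_mxE linearZ /= !(ipZl ip_inner) (ipZr ip_inner) conjCK mulrCA mulrA.
Qed.

End RankOne.
End PositiveMatrices.

Section PositivelyGenerated.
Variables (R : realType) (H : lmodType R[i]) (ip : H -> H -> R[i]).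
Hypothesis ip_inner : inner_product ip.
Variable S : (H -> H) -> Prop.
Hypotheses (S_opsys : operator_system ip S) (S_posgen : positively_generated ip S).

Lemma opsys_linear T : S T -> linear T.
Proof. by have [bounded _ _ _] := S_opsys; move=> /bounded []. Qed.

Lemma opsys0 : S 0.
Proof. by have [_ S0 _ _] := S_opsys. Qed.

Lemma opsys_comb a T U : S T -> S U -> S (a *: T + U).
Proof. by have [_ _ Scomb _] := S_opsys; apply: Scomb. Qed.

Lemma opsysD T U : S T -> S U -> S (T + U).
Proof. by rewrite -[T in T + U]scale1r; apply: opsys_comb. Qed.

Lemma opsysZ a T : S T -> S (a *: T).
Proof. by move=> ST; rewrite -[a *: T]addr0; apply: opsys_comb => //; apply: opsys0. Qed.

Variable n : nat.

Lemma in_Mn0 : in_Mn S (0 : 'M[H -> H]_n).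
Proof. by move=> i j; rewrite mxE; apply: opsys0. Qed.

Lemma in_MnD (P Q : 'M[H -> H]_n) : in_Mn S P -> in_Mn S Q -> in_Mn S (P + Q).
Proof. by move=> SP SQ i j; rewrite mxE; apply: opsysD (SP i j) (SQ i j). Qed.

Lemma in_Mn_tensor (a : 'M_n) T : S T -> in_Mn S (mx_tensor a T).
Proof. by move=> ST i j; rewrite mxE; apply: opsysZ. Qed.

Definition mx_pos_diff (M : 'M[H -> H]_n) : Prop :=
  exists P Q, [/\ in_Mn S P, mx_positive ip P, in_Mn S Q, mx_positive ip Q & M = P - Q].

Lemma mx_pos_diff0 : mx_pos_diff 0.
Proof.
exists 0, 0; split; rewrite ?subr0 //; solve [exact: in_Mn0 | exact: mx_positive0].
Qed.

Lemma mx_pos_diffD M N : mx_pos_diff M -> mx_pos_diff N -> mx_pos_diff (M + N).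
Proof.
move=> [P [Q [SP posP SQ posQ ->]]] [P' [Q' [SP' posP' SQ' posQ' ->]]].
exists (P + P'), (Q + Q'); split; try exact: in_MnD; try exact: (mx_positiveD ip_inner).
by rewrite opprD addrACA.
Qed.

Lemma mx_pos_diff_sum I (r : seq I) (P : pred I) (F : I -> 'M[H -> H]_n) :
  (forall i, P i -> mx_pos_diff (F i)) -> mx_pos_diff (\sum_(i <- r | P i) F i).
Proof.
by move=> posF; elim/big_ind: _ => //; [apply: mx_pos_diff0 | apply: mx_pos_diffD].
Qed.

Lemma mx_pos_diff_tensor_outer (u v w : 'rV_n) T : S T -> is_adjoint ip T T ->
  mx_pos_diff (mx_tensor (outer_mx u u - (outer_mx v v + outer_mx w w)) T).
Proof.
move=> ST adjT; have [A [B [SA posA SB posB eqT]]] := S_posgen ST adjT.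
have -> : T = A - B by apply/funext.
have pos_outer C : S C -> (forall x, 0 <= ip (C x) x) -> forall u' : 'rV_n,
    mx_positive ip (mx_tensor (outer_mx u' u') C).
  by move=> SC posC; have := mx_positive_tensor_outer ip_inner (opsys_linear SC) posC.
have pos_pair C : S C -> (forall x, 0 <= ip (C x) x) ->
    mx_positive ip (mx_tensor (outer_mx v v + outer_mx w w) C).
  move=> SC posC; rewrite mx_tensorDl.
  by apply: (mx_positiveD ip_inner); apply: pos_outer.
exists (mx_tensor (outer_mx u u) A + mx_tensor (outer_mx v v + outer_mx w w) B),
       (mx_tensor (outer_mx v v + outer_mx w w) A + mx_tensor (outer_mx u u) B).
split; try (apply: in_MnD; exact: in_Mn_tensor); last exact: mx_tensorBB.
- by apply: (mx_positiveD ip_inner); [apply: pos_outer | apply: pos_pair].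
- by apply: (mx_positiveD ip_inner); [apply: pos_pair | apply: pos_outer].
Qed.

Lemma mx_pos_diff_hermitian_pair (u v : 'rV_n) Y Y' :
  S Y -> S Y' -> is_adjoint ip Y Y' ->
  mx_pos_diff (mx_tensor (outer_mx u v) Y + mx_tensor (outer_mx v u) Y').
Proof.
move=> SY SY' adjY.
rewrite -mx_tensor_hermitian_pair -outer_mx_polarD -outer_mx_polarZ.
have S_comb c : S (c *: Y + c^* *: Y') by apply: opsysD; apply: opsysZ.
have adj_comb c := is_adjoint_selfadjoint_comb ip_inner c adjY.
by apply: mx_pos_diffD; apply: mx_pos_diff_tensor_outer;
  first [apply: S_comb | apply: adj_comb].
Qed.

Lemma mx_pos_diff_selfadjoint (X : 'M[H -> H]_n) :
  in_Mn S X -> mx_selfadjoint ip X -> mx_pos_diff X.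
Proof.
move=> SX adjX; rewrite [X]mx_tensor_delta_halves.
apply: mx_pos_diff_sum => i _; apply: mx_pos_diff_sum => j _.
have half_real : (2%:R^-1 : R[i])^* = 2%:R^-1 by rewrite fmorphV rmorph_nat.
have := mx_pos_diff_hermitian_pair (delta_mx 0 i) (delta_mx 0 j).
rewrite !outer_mx_delta; apply; try exact/opsysZ/SX.
by rewrite -[in X in is_adjoint _ _ X]half_real; apply: (is_adjointZ ip_inner) (adjX i j).
Qed.

End PositivelyGenerated.

Theorem proposition8p4 (R : realType) (H : lmodType R[i]) (ip : H -> H -> R[i])
    (hH : hilbert_space ip) (S : (H -> H) -> Prop) (hS : operator_system ip S)
    (hpos : positively_generated ip S) :
  forall n : nat, (1 <= n)%N -> mx_positively_generated ip S n.
Proof.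
move=> n _ X SX adjX; have [ip_inner _] := hH.
have [P [Q [SP posP SQ posQ ->]]] := mx_pos_diff_selfadjoint ip_inner hS hpos SX adjX.
by exists P, Q; split => // i j x; rewrite !mxE.
Qed.
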